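(* Let $\mathfrak g=(\mathfrak g_1\xrightarrow{d}\mathfrak g_0)$ be a Lie algebra in the Loday–Pirashvili category $\mathcal{LM}$, with bracket $[\cdot,\cdot]$ (the Lie bracket on $\mathfrak g_0$ and the right action $\mathfrak g_1\otimes\mathfrak g_0\to\mathfrak g_1$). Consider the free graded Lie algebra on $\mathfrak g_0+\mathfrak g_1$ ($\mathfrak g_i$ in degree $i$), with bracket $\llbracket\cdot,\cdot\rrbracket$ and the differential induced by $d$, and let $E\mathfrak g$ be its quotient by the relations $\llbracket x,y\rrbracket=[x,y]$ for $x,y\in\mathfrak g_0$ and for $x\in\mathfrak g_1$, $y\in\mathfrak g_0$. Then $E\mathfrak g$ is a differential graded Lie algebra, and its truncation modulo terms of degree $\ge 2$, i.e. the map $(E\mathfrak g)_1\xrightarrow{d}(E\mathfrak g)_0$ with the restricted brackets $(E\mathfrak g)_0\otimes(E\mathfrak g)_0\to(E\mathfrak g)_0$ and $(E\mathfrak g)_1\otimes(E\mathfrak g)_0\to(E\mathfrak g)_1$, coincides with $\mathfrak g$ as a Lie algebra in $\mathcal{LM}$.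
   Context: Fix a field $\mathbf k$ of characteristic zero. The Loday–Pirashvili category $\mathcal{LM}$ has objects linear maps $U\xrightarrow{f}V$ of $\mathbf k$-vector spaces and morphisms commutative squares. A Lie algebra in $\mathcal{LM}$ is a map $M\xrightarrow{f}\mathfrak g$ where $\mathfrak g$ is a Lie algebra, $M$ is a right $\mathfrak g$-module, and $f$ is a morphism of right $\mathfrak g$-modules ($\mathfrak g$ acting on itself by the right adjoint action). *)

From HB Require Import structures.
From mathcomp Require Import all_boot all_algebra.
Set Implicit Arguments. Unset Strict Implicit. Unset Printing Implicit Defensive.
Import GRing.Theory.
Local Open Scope ring_scope.

(* A Lie algebra in LM: M --f--> g, g a Lie algebra (bracket br), M a right
   g-module (action act), f a morphism of right g-modules. *)
Definition LM_lie_algebra (k : fieldType) (g0 g1 : lmodType k)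
  (br : g0 -> g0 -> g0) (act : g1 -> g0 -> g1) (d : g1 -> g0) : Prop :=
  (
      (forall (a : k) x y z, br (a *: x + y) z = a *: br x z + br y z) /\
      (forall (a : k) x y z, br x (a *: y + z) = a *: br x y + br x z) /\
      (forall x, br x x = 0) /\
      (forall x y z, br x (br y z) + br y (br z x) + br z (br x y) = 0) /\
      (forall (a : k) m n x, act (a *: m + n) x = a *: act m x + act n x) /\
      (forall (a : k) m x y, act m (a *: x + y) = a *: act m x + act m y) /\
      (forall m x y, act m (br x y) = act (act m x) y - act (act m y) x) /\
      (forall (a : k) m n, d (a *: m + n) = a *: d m + d n) /\
      (forall m x, d (act m x) = br (d m) x)).

Inductive term (K V0 V1 : Type) : Type :=
| T0 of V0
| T1 of V1
| Tzero of nat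
| Tadd of term K V0 V1 & term K V0 V1
| Tscale of K & term K V0 V1
| Tbr of term K V0 V1 & term K V0 V1.

Arguments T0 {K V0 V1}.
Arguments T1 {K V0 V1}.
Arguments Tzero {K V0 V1}.
Arguments Tadd {K V0 V1}.
Arguments Tscale {K V0 V1}.
Arguments Tbr {K V0 V1}.

Fixpoint tdeg K V0 V1 (t : term K V0 V1) : nat :=
  match t with
  | T0 _ => 0 | T1 _ => 1 | Tzero n => n
  | Tadd a _ => tdeg a | Tscale _ a => tdeg a
  | Tbr a b => tdeg a + tdeg b
  end.

(* well-formed = homogeneous (sums only of terms of equal degree) *)
Fixpoint wf K V0 V1 (t : term K V0 V1) : bool :=
  match t with
  | T0 _ | T1 _ | Tzero _ => true
  | Tadd a b => [&& wf a, wf b & tdeg a == tdeg b]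
  | Tscale _ a => wf a
  | Tbr a b => wf a && wf b
  end.

(* The congruence defining E g: quotient of the free graded Lie algebra on
   g0 + g1 (i.e. the free graded nonassociative algebra on the graded vector
   space g0 + g1, modulo graded antisymmetry and graded Jacobi) by the ideal
   generated by [[x,y]] = [x,y] (x,y in g0) and [[m,x]] = m.x (m in g1, x in g0).
   (E g)_n = well-formed terms of degree n modulo Econg. *)
Inductive Econg (k : fieldType) (g0 g1 : lmodType k)
  (br : g0 -> g0 -> g0) (act : g1 -> g0 -> g1) :
  term k g0 g1 -> term k g0 g1 -> Prop :=
| Ec_refl t : Econg br act t t
| Ec_sym a b : Econg br act a b -> Econg br act b a
| Ec_trans a b c : Econg br act a b -> Econg br act b c -> Econg br act a c
| Ec_add a a' b b' : Econg br act a a' -> Econg br act b b' ->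
    Econg br act (Tadd a b) (Tadd a' b')
| Ec_scale c a a' : Econg br act a a' -> Econg br act (Tscale c a) (Tscale c a')
| Ec_br a a' b b' : Econg br act a a' -> Econg br act b b' ->
    Econg br act (Tbr a b) (Tbr a' b')
| Ec_addA a b c : wf a -> wf b -> wf c -> tdeg a = tdeg b -> tdeg b = tdeg c ->
    Econg br act (Tadd a (Tadd b c)) (Tadd (Tadd a b) c)
| Ec_addC a b : wf a -> wf b -> tdeg a = tdeg b ->
    Econg br act (Tadd a b) (Tadd b a)
| Ec_add0 a : wf a -> Econg br act (Tadd a (Tzero (tdeg a))) a
| Ec_addN a : wf a -> Econg br act (Tadd a (Tscale (-1) a)) (Tzero (tdeg a))
| Ec_scale1 a : wf a -> Econg br act (Tscale 1 a) a
| Ec_scaleA c c' a : wf a ->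
    Econg br act (Tscale c (Tscale c' a)) (Tscale (c * c') a)
| Ec_scaleDr c a b : wf a -> wf b -> tdeg a = tdeg b ->
    Econg br act (Tscale c (Tadd a b)) (Tadd (Tscale c a) (Tscale c b))
| Ec_scaleDl c c' a : wf a ->
    Econg br act (Tscale (c + c') a) (Tadd (Tscale c a) (Tscale c' a))
| Ec_T0add x y : Econg br act (T0 (x + y)) (Tadd (T0 x) (T0 y))
| Ec_T0scale c x : Econg br act (T0 (c *: x)) (Tscale c (T0 x))
| Ec_T1add m n : Econg br act (T1 (m + n)) (Tadd (T1 m) (T1 n))
| Ec_T1scale c m : Econg br act (T1 (c *: m)) (Tscale c (T1 m))
| Ec_brDl a a' b : wf a -> wf a' -> wf b -> tdeg a = tdeg a' ->
    Econg br act (Tbr (Tadd a a') b) (Tadd (Tbr a b) (Tbr a' b))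
| Ec_brDr a b b' : wf a -> wf b -> wf b' -> tdeg b = tdeg b' ->
    Econg br act (Tbr a (Tadd b b')) (Tadd (Tbr a b) (Tbr a b'))
| Ec_brZl c a b : wf a -> wf b ->
    Econg br act (Tbr (Tscale c a) b) (Tscale c (Tbr a b))
| Ec_brZr c a b : wf a -> wf b ->
    Econg br act (Tbr a (Tscale c b)) (Tscale c (Tbr a b))
| Ec_anti a b : wf a -> wf b ->
    Econg br act (Tbr a b)
      (Tscale (- (-1) ^+ (tdeg a * tdeg b)) (Tbr b a))
| Ec_jacobi a b c : wf a -> wf b -> wf c ->
    Econg br act (Tbr a (Tbr b c))
      (Tadd (Tbr (Tbr a b) c)
            (Tscale ((-1) ^+ (tdeg a * tdeg b)) (Tbr b (Tbr a c))))
| Ec_rel00 x y : Econg br act (Tbr (T0 x) (T0 y)) (T0 (br x y))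
| Ec_rel10 m x : Econg br act (Tbr (T1 m) (T0 x)) (T1 (act m x)).

(* The differential induced by d: degree -1 derivation,
   d[[a,b]] = [[da,b]] + (-1)^|a| [[a,db]], d = 0 on degree 0. Meant to be
   applied to well-formed terms of degree >= 1 (terms of degree 0 are sent
   to 0 in degree -1, which is not represented). *)
Fixpoint dT (k : pzRingType) V0 V1 (d : V1 -> V0) (t : term k V0 V1)
  : term k V0 V1 :=
  match t with
  | T0 _ => Tzero 0
  | T1 m => T0 (d m)
  | Tzero n => Tzero n.-1
  | Tadd a b => Tadd (dT d a) (dT d b)
  | Tscale c a => Tscale c (dT d a)
  | Tbr a b =>
      if tdeg a == 0%N then Tbr a (dT d b)
      else if tdeg b == 0%N then Tbr (dT d a) b
      else Tadd (Tbr (dT d a) b) (Tscale ((-1) ^+ tdeg a) (Tbr a (dT d b)))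
  end.

From HB Require Import structures.
From mathcomp Require Import all_boot all_algebra.
From mathcomp Require Import ring zify.
Set Implicit Arguments. Unset Strict Implicit. Unset Printing Implicit Defensive.
Import GRing.Theory.
Local Open Scope ring_scope.

(* E g is presented by generators and relations, so each claim is checked on
   the generators of the congruence [Econg].  The induced derivation [dT]
   respects the multilinearity axioms, and applied to an instance of graded
   antisymmetry or Jacobi it yields a combination of instances of the same
   axioms with [dT] moved onto one argument; these identities are verified by a
   normalizer for the multilinear axioms.  It respects the relation
   [[m,x]] = m.x because d(m.x) = [dm,x].
   Injectivity of g0 -> (E g)_0 and g1 -> (E g)_1 comes from a model: g0 + g1
   with bracket ((x,m),(y,n)) |-> ([x,y], m.y - n.x), everything of degree >= 2
   being 0, is a graded Lie algebra (the module axiom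
   m.[x,y] = (m.x).y - (m.y).x is its Jacobi identity) satisfying the defining
   relations of E g.  Surjectivity holds because every term of degree 0 or 1 is
   rewritten into a generator by those relations. *)

Section LinearFun.
Variables (R : pzRingType) (U V : lmodType R) (f : U -> V).
Hypothesis fL : linear f.

Lemma linear_funD x y : f (x + y) = f x + f y.
Proof. exact: (GRing.semilinear_linear fL).2. Qed.

Lemma linear_funZ c x : f (c *: x) = c *: f x.
Proof. exact: (GRing.semilinear_linear fL).1. Qed.

Lemma linear_fun0 : f 0 = 0.
Proof. by rewrite -(scale0r 0) linear_funZ scale0r. Qed.

Lemma linear_funN x : f (- x) = - f x.
Proof. by rewrite -scaleN1r linear_funZ scaleN1r. Qed.

Lemma linear_funB x y : f (x - y) = f x - f y.
Proof. by rewrite linear_funD linear_funN. Qed.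

End LinearFun.

Inductive lexpr (K : Type) :=
  LAtom of nat | LZero of nat | LAdd of lexpr K & lexpr K
| LScale of K & lexpr K | LBr of lexpr K & lexpr K.
Arguments LAtom {K}. Arguments LZero {K}.

Inductive mono := MAtom of nat | MBr of mono & mono.

Fixpoint mono_eqb (a b : mono) : bool :=
  match a, b with
  | MAtom i, MAtom j => eqn i j
  | MBr a1 a2, MBr b1 b2 => mono_eqb a1 b1 && mono_eqb a2 b2
  | _, _ => false
  end.

Lemma mono_eqbP : Equality.axiom mono_eqb.
Proof.
elim=> [i|a1 IH1 a2 IH2] [j|b1 b2] /=; try by constructor.
- by apply: (iffP eqnP) => [->|[]].
- case: IH1 => [->|n]; last by constructor; case.
  by case: IH2 => [->|n]; constructor; last case.
Qed.
HB.instance Definition _ := hasDecEq.Build mono mono_eqbP.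

Section Congruence.
Variables (k : fieldType) (g0 g1 : lmodType k)
  (br : g0 -> g0 -> g0) (act : g1 -> g0 -> g1).
Local Notation T := (term k g0 g1).
Local Notation E := (Econg br act).

Lemma Erefl a : E a a. Proof. exact: Ec_refl. Qed.
Lemma Esym a b : E a b -> E b a. Proof. exact: Ec_sym. Qed.
Lemma Etrans a b c : E a b -> E b c -> E a c. Proof. exact: Ec_trans. Qed.

Lemma Econg_tdeg_wf a b : E a b -> tdeg a = tdeg b /\ wf a = wf b.
Proof.
elim; clear; intros; simpl in *;
  repeat match goal with H : _ /\ _ |- _ => destruct H end;
  repeat match goal with H : is_true (wf ?x) |- _ => rewrite H; clear H end;
  repeat match goal with H : tdeg ?x = _ |- _ => rewrite H; clear H end;
  rewrite ?eqxx /=; try (split; congruence).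
all: split; rewrite ?andbb //; try lia; apply/esym/eqP; lia.
Qed.

Lemma Econg_wf a b : E a b -> wf a -> wf b.
Proof. by case/Econg_tdeg_wf=> _ ->. Qed.

Lemma Econg_tdeg a b : E a b -> tdeg a = tdeg b.
Proof. by case/Econg_tdeg_wf. Qed.

Lemma Econg_add0l a : wf a -> E (Tadd (Tzero (tdeg a)) a) a.
Proof. by move=> wa; apply: Etrans (Ec_add0 _ _ wa); apply: Ec_addC. Qed.

Lemma Econg_scale0 a : wf a -> E (Tscale 0 a) (Tzero (tdeg a)).
Proof.
move=> wa; set s := Tscale 0 a; have ws : wf s by [].
have ss : E s (Tadd s s) by have := Ec_scaleDl br act 0 0 wa; rewrite addr0.
rewrite [tdeg a]/(tdeg s); apply: Etrans (Ec_addN _ _ ws).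
apply: Etrans (Esym (Ec_add0 _ _ ws)) _.
apply: Etrans (Ec_add (Erefl s) (Esym (Ec_addN _ _ ws))) _.
apply: Etrans (Ec_addA _ _ ws ws _ _ _) _ => //.
exact: Ec_add (Esym ss) (Erefl _).
Qed.

Lemma Econg_scaler0 c n : E (Tscale c (Tzero n)) (Tzero n : T).
Proof.
have w : wf (Tzero n : T) by [].
apply: Etrans (Ec_scale c (Esym (Econg_scale0 w))) _.
by apply: Etrans (Ec_scaleA _ _ _ _ _) _; rewrite // mulr0; apply: Econg_scale0.
Qed.

Lemma Econg_addIr a b c : wf a -> wf b -> wf c -> tdeg a = tdeg c ->
  tdeg b = tdeg c -> E (Tadd a c) (Tadd b c) -> E a b.
Proof.
move=> wa wb wc dac dbc h.
have addK u : wf u -> tdeg u = tdeg c -> E u (Tadd (Tadd u c) (Tscale (-1) c)).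
  move=> wu du; apply: Etrans (Esym (Ec_add0 _ _ wu)) _.
  rewrite du; apply: Etrans (Ec_add (Erefl u) (Esym (Ec_addN _ _ wc))) _.
  exact: Ec_addA.
apply: Etrans (addK _ wa dac) _; apply: Etrans _ (Esym (addK _ wb dbc)).
exact: Ec_add h (Erefl _).
Qed.

Lemma Econg_addACA a b c e : wf a -> wf b -> wf c -> wf e ->
  tdeg a = tdeg b -> tdeg b = tdeg c -> tdeg c = tdeg e ->
  E (Tadd (Tadd a b) (Tadd c e)) (Tadd (Tadd a c) (Tadd b e)).
Proof.
move=> wa wb wc we dab dbc dce.
have wce : wf (Tadd c e) by rewrite /= wc we dce eqxx.
have wbe : wf (Tadd b e) by rewrite /= wb we -dce dbc eqxx.
apply: Etrans (Esym (Ec_addA _ _ wa wb wce dab dbc)) _.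
apply: Etrans _ (Ec_addA _ _ wa wc wbe (etrans dab dbc) (esym dbc)).
apply: Ec_add (Erefl _) _.
apply: Etrans (Ec_addA _ _ wb wc we dbc dce) _.
apply: Etrans _ (Esym (Ec_addA _ _ wc wb we (esym dbc) (etrans dbc dce))).
exact: Ec_add (Ec_addC _ _ wb wc dbc) (Erefl _).
Qed.

Lemma Econg_br0r a n : wf a -> E (Tbr a (Tzero n)) (Tzero (tdeg a + n)).
Proof.
move=> wa; have w : wf (Tzero n : T) by [].
apply: Etrans (Ec_br (Erefl a) (Esym (Econg_scale0 w))) _.
apply: Etrans (Ec_brZr _ _ _ wa w) _.
by apply: (@Econg_scale0 (Tbr a (Tzero n))); rewrite /= wa.
Qed.

Lemma Econg_br0l a n : wf a -> E (Tbr (Tzero n) a) (Tzero (n + tdeg a)).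
Proof.
move=> wa; have w : wf (Tzero n : T) by [].
apply: Etrans (Ec_br (Esym (Econg_scale0 w)) (Erefl a)) _.
apply: Etrans (Ec_brZl _ _ _ w wa) _.
by apply: (@Econg_scale0 (Tbr (Tzero n) a)); rewrite /= wa.
Qed.

(* The graded antisymmetry and Jacobi axioms are not consequences of
   multilinearity; an instance [u ~ v] of them is fed to the multilinear
   normalizer below by adding [l v] and [l u] to the two sides. *)
Lemma Econg_by_rel L R u v (l : k) : E u v -> wf L -> wf R -> wf u ->
  tdeg L = tdeg u -> tdeg R = tdeg u ->
  E (Tadd L (Tscale l v)) (Tadd R (Tscale l u)) -> E L R.
Proof.
move=> huv wL wR wu dL dR h.
have wv : wf v by apply: Econg_wf huv wu.
have dv : tdeg v = tdeg u by rewrite (Econg_tdeg huv).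
apply: (@Econg_addIr _ _ (Tscale l v)) => //=; rewrite ?dv //.
exact: Etrans h (Ec_add (Erefl _) (Ec_scale _ huv)).
Qed.

Section Normalizer.
Variable env : seq T.

Definition atom i := nth (Tzero 0) env i.

Fixpoint interp (e : lexpr k) : T :=
  match e with
  | LAtom i => atom i
  | LZero n => Tzero n
  | LAdd a b => Tadd (interp a) (interp b)
  | LScale c a => Tscale c (interp a)
  | LBr a b => Tbr (interp a) (interp b)
  end.

Fixpoint mono_term (m : mono) : T :=
  match m with MAtom i => atom i | MBr a b => Tbr (mono_term a) (mono_term b) end.

Fixpoint lincomb n (l : seq (k * mono)) : T :=
  match l with
  | [::] => Tzero n
  | cm :: l' => Tadd (Tscale cm.1 (mono_term cm.2)) (lincomb n l')
  end.

Fixpoint lincomb_br (l1 l2 : seq (k * mono)) : seq (k * mono) :=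
  match l1 with
  | [::] => [::]
  | cm :: l1' =>
      [seq (cm.1 * dm.1, MBr cm.2 dm.2) | dm <- l2] ++ lincomb_br l1' l2
  end.

Fixpoint expand (e : lexpr k) : seq (k * mono) :=
  match e with
  | LAtom i => [:: (1, MAtom i)]
  | LZero _ => [::]
  | LAdd a b => expand a ++ expand b
  | LScale c a => [seq (c * cm.1, cm.2) | cm <- expand a]
  | LBr a b => lincomb_br (expand a) (expand b)
  end.

Fixpoint coef (l : seq (k * mono)) (m : mono) : k :=
  match l with
  | [::] => 0
  | cm :: l' => if mono_eqb cm.2 m then cm.1 + coef l' m else coef l' m
  end.

(* A list of conjuncts rather than a [forall], so that each coefficient
   identity is a separate goal for [ring]. *)
Fixpoint coef_eqs (M : seq mono) (l1 l2 : seq (k * mono)) : Prop :=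
  match M with
  | [::] => True
  | m :: M' => coef l1 m = coef l2 m /\ coef_eqs M' l1 l2
  end.

Definition monos e := [seq cm.2 | cm <- expand e].

Definition homog_mono n (m : mono) := wf (mono_term m) && (tdeg (mono_term m) == n).
Definition homog n (l : seq (k * mono)) := all (homog_mono n) (unzip2 l).

Lemma homog_lincomb n l : homog n l -> wf (lincomb n l) && (tdeg (lincomb n l) == n).
Proof.
elim: l => [|[c m] l IH] //= /andP[/andP[wm /eqP dm] /IH /andP[-> /eqP ->]].
by rewrite wm dm eqxx.
Qed.

Lemma homog_cat n l1 l2 : homog n (l1 ++ l2) = homog n l1 && homog n l2.
Proof. by rewrite /homog /unzip2 map_cat all_cat. Qed.

Lemma homog_scale n c l : homog n l -> homog n [seq (c * cm.1, cm.2) | cm <- l].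
Proof. by rewrite /homog /unzip2 -map_comp. Qed.

Lemma lincomb_cat n l1 l2 : homog n l1 -> homog n l2 ->
  E (lincomb n (l1 ++ l2)) (Tadd (lincomb n l1) (lincomb n l2)).
Proof.
move=> + h2; have /andP[w2 /eqP d2] := homog_lincomb h2.
elim: l1 => [|[c m] l IH] /=.
  by move=> _; apply: Esym; rewrite -{1}d2; apply: Econg_add0l.
case/andP=> /andP[wm /eqP dm] hl; have /andP[wl /eqP dl] := homog_lincomb hl.
apply: Etrans (Ec_add (Erefl _) (IH hl)) _.
by apply: Ec_addA => //=; rewrite ?dm ?dl.
Qed.

Lemma lincomb_scale n c l : homog n l ->
  E (lincomb n [seq (c * cm.1, cm.2) | cm <- l]) (Tscale c (lincomb n l)).
Proof.
elim: l => [|[c' m] l IH] /=; first by move=> _; apply: Esym; apply: Econg_scaler0.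
case/andP=> /andP[wm /eqP dm] hl; have /andP[wl /eqP dl] := homog_lincomb hl.
apply: Etrans (Ec_add (Esym (Ec_scaleA _ _ _ _ wm)) (IH hl)) _.
by apply: Esym; apply: Ec_scaleDr => //=; rewrite ?dm ?dl.
Qed.

Lemma homog_brl p q m l : homog_mono p m -> homog q l ->
  homog (p + q) [seq (dm.1, MBr m dm.2) | dm <- l].
Proof.
move=> /andP[wm /eqP dm]; rewrite /homog /unzip2 -map_comp.
elim: l => [|[c m'] l IH] //= /andP[/andP[wm' /eqP dm'] /IH ->].
by rewrite /homog_mono /= wm wm' dm dm' eqxx.
Qed.

Lemma lincomb_brl p q m l : homog_mono p m -> homog q l ->
  E (Tbr (mono_term m) (lincomb q l))
    (lincomb (p + q) [seq (dm.1, MBr m dm.2) | dm <- l]).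
Proof.
move=> hm; have /andP[wm /eqP dm] := hm.
elim: l => [|[c m'] l IH] /=; first by move=> _; rewrite -dm; apply: Econg_br0r.
case/andP=> /andP[wm' /eqP dm'] hl; have /andP[wl /eqP dl] := homog_lincomb hl.
apply: Etrans (Ec_brDr _ _ _ _ _ _) _ => //=; rewrite ?dm' ?dl //.
exact: Ec_add (Ec_brZr _ _ _ _ _) (IH hl).
Qed.

Lemma homog_lincomb_br p q l1 l2 : homog p l1 -> homog q l2 ->
  homog (p + q) (lincomb_br l1 l2).
Proof.
move=> + h2; elim: l1 => [|[c m] l IH] //= /andP[hm /IH hl].
rewrite homog_cat hl andbT.
by have := homog_scale c (homog_brl hm h2); rewrite -map_comp.
Qed.

Lemma lincomb_brE p q l1 l2 : homog p l1 -> homog q l2 ->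
  E (Tbr (lincomb p l1) (lincomb q l2)) (lincomb (p + q) (lincomb_br l1 l2)).
Proof.
move=> + h2; have /andP[w2 /eqP d2] := homog_lincomb h2.
elim: l1 => [|[c m] l IH] /=; first by move=> _; rewrite -{2}d2; apply: Econg_br0l.
case/andP=> hm hl; have /andP[wm /eqP dm] := hm.
have /andP[wl /eqP dl] := homog_lincomb hl.
apply: Etrans (Ec_brDl _ _ _ _ _ _) _ => //=; rewrite ?dm ?dl //.
have hb := homog_brl hm h2.
have -> : [seq (c * dm0.1, MBr m dm0.2) | dm0 <- l2] =
          [seq (c * cm.1, cm.2) | cm <- [seq (dm.1, MBr m dm.2) | dm <- l2]].
  by rewrite -map_comp.
apply: Etrans _ (Esym (lincomb_cat (homog_scale c hb) (homog_lincomb_br hl h2))).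
apply: Ec_add (IH hl).
apply: Etrans (Ec_brZl _ _ _ wm w2) _.
apply: Esym; apply: Etrans (lincomb_scale c hb) _.
apply: Ec_scale; apply: Esym; exact: lincomb_brl.
Qed.

Lemma expand_sound e : wf (interp e) ->
  homog (tdeg (interp e)) (expand e) /\
  E (interp e) (lincomb (tdeg (interp e)) (expand e)).
Proof.
elim: e => [i|n|a IHa b IHb|c a IHa|a IHa b IHb] /=.
- move=> wi; split; first by rewrite /homog /= /homog_mono /= wi eqxx.
  by apply: Etrans (Esym (Ec_scale1 _ _ wi)) _; apply: Esym; apply: Ec_add0.
- by split=> //; apply: Erefl.
- case/and3P=> wa wb /eqP dab.
  case: (IHa wa) => ha ea; case: (IHb wb) => hb eb; rewrite -dab in hb eb.
  split; first by rewrite homog_cat ha hb.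
  exact: Etrans (Ec_add ea eb) (Esym (lincomb_cat ha hb)).
- move=> wa; case: (IHa wa) => ha ea; split; first exact: homog_scale.
  exact: Etrans (Ec_scale c ea) (Esym (lincomb_scale c ha)).
- case/andP=> wa wb; case: (IHa wa) => ha ea; case: (IHb wb) => hb eb.
  split; first exact: homog_lincomb_br.
  exact: Etrans (Ec_br ea eb) (lincomb_brE ha hb).
Qed.

Lemma lincomb_coef0 n M : all (homog_mono n) M ->
  E (lincomb n [seq (0, m) | m <- M]) (Tzero n).
Proof.
elim: M => [|m M IH] /=; first by move=> _; apply: Erefl.
case/andP=> /andP[wm /eqP dm] hM.
apply: Etrans (Ec_add (Econg_scale0 wm) (IH hM)) _.
by rewrite dm; apply: Ec_add0.
Qed.

Lemma lincomb_coefD n M (f g : mono -> k) : all (homog_mono n) M ->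
  E (lincomb n [seq (f m + g m, m) | m <- M])
    (Tadd (lincomb n [seq (f m, m) | m <- M]) (lincomb n [seq (g m, m) | m <- M])).
Proof.
elim: M => [|m M IH] /=.
  by move=> _; apply: Esym; exact: (@Ec_add0 _ _ _ _ _ (Tzero n)).
case/andP=> hm hM; have /andP[wm /eqP dm] := hm.
have hcoef h : homog n [seq (h m0, m0) | m0 <- M].
  by rewrite /homog /unzip2 -map_comp map_id.
have /andP[wF /eqP dF] := homog_lincomb (hcoef f).
have /andP[wG /eqP dG] := homog_lincomb (hcoef g).
apply: Etrans (Ec_add (Ec_scaleDl _ _ _ _ wm) (IH hM)) _.
by apply: Econg_addACA => //=; rewrite ?wm ?wF ?wG ?dF ?dG ?dm ?eqxx.
Qed.

Lemma lincomb_delta n M m0 c : all (homog_mono n) M -> uniq M -> m0 \in M ->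
  E (lincomb n [seq ((if m == m0 then c else 0), m) | m <- M])
    (Tscale c (mono_term m0)).
Proof.
elim: M => [|m M IH] //= /andP[hm hM] /andP[mM uM]; have /andP[wm /eqP dm] := hm.
rewrite in_cons; case: eqP => [-> _|ne /= m0M].
- have -> : [seq ((if m1 == m then c else 0), m1) | m1 <- M] = [seq (0, m1) | m1 <- M].
    by apply/eq_in_map => m1 m1M; case: eqP => // e; move: mM; rewrite -e m1M.
  apply: Etrans (Ec_add (Erefl _) (lincomb_coef0 hM)) _.
  by rewrite eqxx -dm; apply: (@Ec_add0 _ _ _ _ _ (Tscale c (mono_term m))).
- have /negPf -> : m != m0 by apply/eqP => /esym.
  have /andP[w0 /eqP d0] : homog_mono n m0 by move/allP: hM; apply.
  apply: Etrans (Ec_add (Econg_scale0 wm) (IH hM uM m0M)) _.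
  by rewrite dm -d0; apply: (@Econg_add0l (Tscale c (mono_term m0))).
Qed.

Lemma coef_cons c m0 l m :
  coef ((c, m0) :: l) m = (if m == m0 then c else 0) + coef l m.
Proof.
by rewrite /= -[mono_eqb m0 m]/(m0 == m) eq_sym; case: eqP; rewrite ?add0r.
Qed.

Lemma lincomb_collect n l M : homog n l -> all (homog_mono n) M -> uniq M ->
  {subset unzip2 l <= M} ->
  E (lincomb n l) (lincomb n [seq (coef l m, m) | m <- M]).
Proof.
move=> + hM uM; elim: l => [|[c m0] l IH] /=.
  by move=> *; apply: Esym; apply: lincomb_coef0.
case/andP=> hm0 hl sub.
have m0M : m0 \in M by apply: sub; rewrite in_cons eqxx.
have subl : {subset unzip2 l <= M} by move=> x xl; apply: sub; rewrite in_cons xl orbT.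
apply: Etrans (Ec_add (Esym (lincomb_delta c hM uM m0M)) (IH hl subl)) _.
apply: Etrans (Esym (lincomb_coefD _ _ hM)) _.
by under eq_map => m do rewrite -coef_cons; apply: Erefl.
Qed.

Lemma coef_eqs_in M l1 l2 : coef_eqs M l1 l2 -> {in M, coef l1 =1 coef l2}.
Proof.
elim: M => [|m M IH] //= [h1 h2] x; rewrite in_cons.
by case: eqP => [-> _|_ /= /(IH h2)].
Qed.

Lemma Econg_lin e1 e2 L R : interp e1 = L -> interp e2 = R -> wf L -> wf R ->
  tdeg L = tdeg R -> coef_eqs (monos e1 ++ monos e2) (expand e1) (expand e2) ->
  E L R.
Proof.
move=> <- <- w1 w2 d12 ce.
case: (expand_sound w1) => h1 s1; case: (expand_sound w2) => h2 s2.
rewrite -d12 in h2 s2; set n := tdeg (interp e1) in h1 s1 h2 s2.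
set M := undup (monos e1 ++ monos e2).
have hM : all (homog_mono n) M.
  by rewrite all_undup all_cat; apply/andP.
have sub1 : {subset unzip2 (expand e1) <= M} by move=> m h; rewrite mem_undup mem_cat h.
have sub2 : {subset unzip2 (expand e2) <= M}.
  by move=> m h; rewrite mem_undup mem_cat h orbT.
apply: Etrans s1 (Etrans _ (Esym s2)).
apply: Etrans (lincomb_collect h1 hM (undup_uniq _) sub1) _.
apply: Etrans _ (Esym (lincomb_collect h2 hM (undup_uniq _) sub2)).
have -> // : [seq (coef (expand e1) m, m) | m <- M] =
             [seq (coef (expand e2) m, m) | m <- M].
  by apply/eq_in_map => m; rewrite mem_undup => /(coef_eqs_in ce) ->.
exact: Erefl.
Qed.

End Normalizer.
End Congruence.

Ltac list_index x l := lazymatch l with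
  | cons x _ => constr:(0%nat)
  | cons _ ?l' => let n := list_index x l' in constr:(S n) end.

Ltac collect_atoms t acc := lazymatch t with
  | Tadd ?a ?b => let acc := collect_atoms a acc in collect_atoms b acc
  | Tscale _ ?a => collect_atoms a acc
  | Tbr ?a ?b => let acc := collect_atoms a acc in collect_atoms b acc
  | Tzero _ => acc
  | _ => match constr:(tt) with
         | _ => let _ := list_index t acc in acc
         | _ => constr:(cons t acc)
         end
  end.

Ltac reify_term K t l := lazymatch t with
  | Tadd ?a ?b =>
      let ra := reify_term K a l in let rb := reify_term K b l in constr:(LAdd ra rb)
  | Tscale ?c ?a => let ra := reify_term K a l in constr:(LScale c ra)
  | Tbr ?a ?b =>
      let ra := reify_term K a l in let rb := reify_term K b l in constr:(LBr ra rb)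
  | Tzero ?n => constr:(@LZero K n)
  | _ => let i := list_index t l in constr:(@LAtom K i)
  end.

(* Reduces [Econg br act L R] to the well-formedness of both sides, equality
   of degrees and one coefficient identity per bracket monomial. *)
Ltac econg_lin := lazymatch goal with |- Econg ?br ?act ?L ?R =>
  let Ty := type of L in
  let K := lazymatch Ty with term ?K _ _ => K end in
  let l := collect_atoms L (@nil Ty) in let l := collect_atoms R l in
  let eL := reify_term K L l in let eR := reify_term K R l in
  apply (@Econg_lin _ _ _ br act l eL eR L R erefl erefl) end.

Section Differential.
Variables (k : fieldType) (g0 g1 : lmodType k)
  (br : g0 -> g0 -> g0) (act : g1 -> g0 -> g1) (d : g1 -> g0).
Local Notation T := (term k g0 g1).
Local Notation E := (Econg br act).
Local Notation D := (dT d).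

Lemma tdeg_dT (t : T) : tdeg (D t) = (tdeg t).-1.
Proof.
elim: t => [x|m|n|a IHa b IHb|c a IHa|a IHa b IHb] //=.
case Ha: (tdeg a) => [|p] /=; first by rewrite IHb Ha.
by case Hb: (tdeg b) => [|q] /=; rewrite ?IHa ?IHb ?Ha ?Hb ?addn0 ?addSn.
Qed.

Lemma wf_dT (t : T) : wf t -> wf (D t).
Proof.
elim: t => [x|m|n|a IHa b IHb|c a IHa|a IHa b IHb] //=.
  by case/and3P=> wa wb /eqP dab; rewrite IHa // IHb // !tdeg_dT dab eqxx.
case/andP=> wa wb.
case: eqP => [ha|ha] /=; first by rewrite wa IHb.
case: eqP => [hb|hb] /=; first by rewrite IHa.
rewrite IHa // IHb // wa wb !tdeg_dT /=.
by case: (tdeg a) ha => // n _; case: (tdeg b) hb => // m _; rewrite addnS addSn.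
Qed.

Lemma dT_deg0 (t : T) : wf t -> tdeg t = 0%N -> E (D t) (Tzero 0).
Proof.
elim: t => [x|m|n|a IHa b IHb|c a IHa|a IHa b IHb] //=.
- by move=> *; apply: Ec_refl.
- by move=> _ ->; apply: Ec_refl.
- case/and3P=> wa wb /eqP dab ha.
  apply: Etrans (Ec_add (IHa wa ha) (IHb wb _)) _; first by rewrite -dab.
  exact: (@Ec_add0 _ _ _ _ _ (Tzero 0)).
- by move=> wa ha; apply: Etrans (Ec_scale c (IHa wa ha)) (Econg_scaler0 _ _ _ _).
- case/andP=> wa wb /eqP; rewrite addn_eq0 => /andP[/eqP ha /eqP hb].
  rewrite ha eqxx /=; apply: Etrans (Ec_br (Erefl br act a) (IHb wb hb)) _.
  by have := Econg_br0r br act 0 wa; rewrite ha.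
Qed.

Definition parity_sign (b : bool) : k := if b then -1 else 1.

Lemma expN1r_parity n : (-1) ^+ n = parity_sign (odd n).
Proof. by rewrite /parity_sign -signr_odd; case: odd; rewrite ?expr1 ?expr0. Qed.

Ltac subst_degs :=
  repeat match goal with H : tdeg ?x = _ |- context [tdeg ?x] => rewrite H end.
Ltac solve_wf := solve [ assumption | apply: wf_dT; solve_wf ].
Ltac solve_side := simpl; rewrite ?tdeg_dT; subst_degs; simpl;
  repeat (apply/andP; split);
  first [ solve_wf | lia | (apply/eqP; lia) | reflexivity | idtac ].
(* Each coefficient is a signed polynomial in the scalars; splitting on the
   parities of the degrees leaves ring identities. *)
Ltac solve_coefs := simpl; repeat split; rewrite ?tdeg_dT; subst_degs; simpl;
  rewrite ?expN1r_parity; do 3 rewrite ?oddD ?oddM ?oddS ?negbK /=;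
  repeat match goal with |- context [odd ?n] => case: (odd n) end;
  rewrite /parity_sign /=; ring.
Ltac simpl_dT :=
  simpl; rewrite ?tdeg_dT; subst_degs; rewrite ?addSn ?addnS ?add0n ?addn0 /=.
Ltac normalize := econg_lin; [solve_side|solve_side|solve_side|solve_coefs].
Ltac both_sides_deg0 :=
  apply: Etrans; [apply: dT_deg0; solve_side | apply: Esym; apply: dT_deg0; solve_side].
Ltac use_rel H l := apply: (Econg_by_rel (l := l) H); [solve_side..|idtac].

Lemma dT_brDl a a' b : wf a -> wf a' -> wf b -> tdeg a = tdeg a' ->
  E (D (Tbr (Tadd a a') b)) (D (Tadd (Tbr a b) (Tbr a' b))).
Proof.
move=> wa wa' wb; case Ha: (tdeg a) => [|p] Ha'; move/esym in Ha';
  case Hb: (tdeg b) => [|q]; simpl_dT; normalize.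
Qed.

Lemma dT_brDr a b b' : wf a -> wf b -> wf b' -> tdeg b = tdeg b' ->
  E (D (Tbr a (Tadd b b'))) (D (Tadd (Tbr a b) (Tbr a b'))).
Proof.
move=> wa wb wb'; case Hb: (tdeg b) => [|q] Hb'; move/esym in Hb';
  case Ha: (tdeg a) => [|p]; simpl_dT; normalize.
Qed.

Lemma dT_brZl c a b : wf a -> wf b ->
  E (D (Tbr (Tscale c a) b)) (D (Tscale c (Tbr a b))).
Proof.
move=> wa wb.
by case Ha: (tdeg a) => [|p]; case Hb: (tdeg b) => [|q]; simpl_dT; normalize.
Qed.

Lemma dT_brZr c a b : wf a -> wf b ->
  E (D (Tbr a (Tscale c b))) (D (Tscale c (Tbr a b))).
Proof.
move=> wa wb.
by case Ha: (tdeg a) => [|p]; case Hb: (tdeg b) => [|q]; simpl_dT; normalize.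
Qed.

Lemma dT_anti a b : wf a -> wf b ->
  E (D (Tbr a b)) (D (Tscale (- (-1) ^+ (tdeg a * tdeg b)) (Tbr b a))).
Proof.
move=> wa wb.
have A := Ec_anti br act wa (wf_dT wb); have B := Ec_anti br act (wf_dT wa) wb.
case Ha: (tdeg a) => [|p]; case Hb: (tdeg b) => [|q]; [both_sides_deg0|simpl_dT..].
- by use_rel A (1 : k); normalize.
- by use_rel B (1 : k); normalize.
- by use_rel B (1 : k); use_rel A ((-1) ^+ tdeg a : k); normalize.
Qed.

Lemma dT_jacobi a b c : wf a -> wf b -> wf c ->
  E (D (Tbr a (Tbr b c)))
    (D (Tadd (Tbr (Tbr a b) c) (Tscale ((-1) ^+ (tdeg a * tdeg b)) (Tbr b (Tbr a c))))).
Proof.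
move=> wa wb wc.
have A := Ec_jacobi br act (wf_dT wa) wb wc.
have B := Ec_jacobi br act wa (wf_dT wb) wc.
have C := Ec_jacobi br act wa wb (wf_dT wc).
case Ha: (tdeg a) => [|p]; case Hb: (tdeg b) => [|q]; case Hc: (tdeg c) => [|r];
  [both_sides_deg0|simpl_dT..].
- by use_rel C ((-1) ^+ tdeg a * (-1) ^+ tdeg b : k); normalize.
- by use_rel B ((-1) ^+ tdeg a : k); normalize.
- by use_rel B ((-1) ^+ tdeg a : k);
    use_rel C ((-1) ^+ tdeg a * (-1) ^+ tdeg b : k); normalize.
- by use_rel A (1 : k); normalize.
- by use_rel A (1 : k); use_rel C ((-1) ^+ tdeg a * (-1) ^+ tdeg b : k); normalize.
- by use_rel A (1 : k); use_rel B ((-1) ^+ tdeg a : k); normalize.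
- by use_rel A (1 : k); use_rel B ((-1) ^+ tdeg a : k);
    use_rel C ((-1) ^+ tdeg a * (-1) ^+ tdeg b : k); normalize.
Qed.

Section Equivariant.
Hypothesis d_linear : linear d.
Hypothesis d_act : forall m x, d (act m x) = br (d m) x.

Lemma dT_Econg (a b : T) : E a b -> wf a -> E (D a) (D b).
Proof.
elim=> {a b} /=.
- by move=> t _; apply: Ec_refl.
- by move=> a b h IH wb; apply/Esym/IH/(Econg_wf (Esym h) wb).
- by move=> a b c h1 IH1 h2 IH2 wa; apply: Etrans (IH1 wa) (IH2 (Econg_wf h1 wa)).
- by move=> a a' b b' _ IH1 _ IH2 /and3P[wa wb _]; apply: Ec_add (IH1 wa) (IH2 wb).
- by move=> c a a' _ IH wa; apply/Ec_scale/IH.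
- move=> a a' b b' h1 IH1 h2 IH2 /andP[wa wb].
  rewrite -(Econg_tdeg h1) -(Econg_tdeg h2).
  case: (tdeg a == 0%N) => /=; first exact: Ec_br h1 (IH2 wb).
  case: (tdeg b == 0%N) => /=; first exact: Ec_br (IH1 wa) h2.
  exact: Ec_add (Ec_br (IH1 wa) h2) (Ec_scale _ (Ec_br h1 (IH2 wb))).
- by move=> a b c *; apply: Ec_addA; solve_side.
- by move=> a b *; apply: Ec_addC; solve_side.
- by move=> a wa _; rewrite -tdeg_dT; apply: Ec_add0; solve_side.
- by move=> a wa _; rewrite -tdeg_dT; apply: Ec_addN; solve_side.
- by move=> a wa _; apply: Ec_scale1; solve_side.
- by move=> c c' a wa _; apply: Ec_scaleA; solve_side.
- by move=> c a b *; apply: Ec_scaleDr; solve_side.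
- by move=> c c' a wa _; apply: Ec_scaleDl; solve_side.
- by move=> x y _; apply: Esym; apply: (@Ec_add0 _ _ _ _ _ (Tzero 0)).
- by move=> c x _; apply: Esym; apply: Econg_scaler0.
- by move=> m n _; rewrite (linear_funD d_linear); apply: Ec_T0add.
- by move=> c m _; rewrite (linear_funZ d_linear); apply: Ec_T0scale.
- by move=> a a' b wa wa' wb *; apply: dT_brDl.
- by move=> a b b' wa wb wb' *; apply: dT_brDr.
- by move=> c a b wa wb _; apply: dT_brZl.
- by move=> c a b wa wb _; apply: dT_brZr.
- by move=> a b wa wb _; apply: dT_anti.
- by move=> a b c wa wb wc _; apply: dT_jacobi.
- by move=> x y _; apply: Econg_br0r.
- by move=> m x _; rewrite d_act; apply: Ec_rel00.
Qed.

End Equivariant.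

Lemma dT_dT_br a b : wf a -> wf b ->
  E (D (D a)) (Tzero (tdeg a).-2) -> E (D (D b)) (Tzero (tdeg b).-2) ->
  E (D (D (Tbr a b))) (Tzero (tdeg a + tdeg b).-2).
Proof.
move=> wa wb DDa DDb.
have IA := Ec_br DDa (Erefl br act b); have IB := Ec_br (Erefl br act a) DDb.
have [deg_le1|deg_ge2] := leqP (tdeg a + tdeg b) 1.
  have -> : (tdeg a + tdeg b).-2 = 0%N by case: (_ + _)%N deg_le1 => [|[]].
  apply: dT_deg0; first by apply: wf_dT; rewrite /= wa wb.
  by rewrite tdeg_dT /=; case: (_ + _)%N deg_le1 => [|[]].
case Ha: (tdeg a) deg_ge2 => [|[|p]]; case Hb: (tdeg b) => [|[|q]] // _;
  do 2 simpl_dT.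
- by use_rel IB (1 : k); normalize.
- by normalize.
- by use_rel IB (1 : k); normalize.
- by use_rel IA (1 : k); normalize.
- by use_rel IA (1 : k); normalize.
- by use_rel IA (1 : k); use_rel IB (1 : k); normalize.
Qed.

Lemma dT_dT (t : T) : wf t -> E (D (D t)) (Tzero (tdeg t).-2).
Proof.
elim: t => [x|m|n|a IHa b IHb|c a IHa|a IHa b IHb] /=; try by move=> _; apply: Ec_refl.
- case/and3P=> wa wb /eqP dab.
  apply: Etrans (Ec_add (IHa wa) (IHb wb)) _; rewrite dab.
  exact: (@Ec_add0 _ _ _ _ _ (Tzero (tdeg b).-2)).
- by move=> wa; apply: Etrans (Ec_scale c (IHa wa)) (Econg_scaler0 _ _ _ _).
- by case/andP=> wa wb; apply: dT_dT_br; [| |apply: IHa|apply: IHb].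
Qed.

End Differential.

Section Semidirect.
Variables (k : fieldType) (g0 g1 : lmodType k)
  (br : g0 -> g0 -> g0) (act : g1 -> g0 -> g1).
Local Notation T := (term k g0 g1).
Local Notation E := (Econg br act).
Hypothesis br_linl : forall (a : k) x y z, br (a *: x + y) z = a *: br x z + br y z.
Hypothesis br_linr : forall (a : k) x y z, br x (a *: y + z) = a *: br x y + br x z.
Hypothesis br_alt : forall x, br x x = 0.
Hypothesis br_jacobi : forall x y z, br x (br y z) + br y (br z x) + br z (br x y) = 0.
Hypothesis act_linl : forall (a : k) m n x, act (a *: m + n) x = a *: act m x + act n x.
Hypothesis act_linr : forall (a : k) m x y, act m (a *: x + y) = a *: act m x + act m y.
Hypothesis act_br : forall m x y, act m (br x y) = act (act m x) y - act (act m y) x.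

Let br_linear_l z : linear (br^~ z) := fun a x y => br_linl a x y z.
Let br_linear_r x : linear (br x) := fun a y z => br_linr a x y z.
Let act_linear_l x : linear (act^~ x) := fun a m n => act_linl a m n x.
Let act_linear_r m : linear (act m) := fun a x y => act_linr a m x y.

Lemma br0l y : br 0 y = 0. Proof. exact: linear_fun0 (br_linear_l y). Qed.
Lemma br0r x : br x 0 = 0. Proof. exact: linear_fun0 (br_linear_r x). Qed.
Lemma act0l x : act 0 x = 0. Proof. exact: linear_fun0 (act_linear_l x). Qed.
Lemma act0r m : act m 0 = 0. Proof. exact: linear_fun0 (act_linear_r m). Qed.

Lemma brC x y : br x y = - br y x.
Proof.
have := br_alt (x + y).
rewrite (linear_funD (br_linear_l _)) !(linear_funD (br_linear_r _)).
rewrite !br_alt add0r addr0.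
by move/eqP; rewrite addr_eq0 => /eqP.
Qed.

Lemma br_derivation x y z : br x (br y z) = br (br x y) z + br y (br x z).
Proof.
rewrite (brC (br x y)) (brC x z) (linear_funN (br_linear_r _)).
have /eqP := br_jacobi x y z; rewrite -addrA addr_eq0 => /eqP ->.
by rewrite opprD addrC.
Qed.

(* The bracket of the graded Lie algebra g0 + g1, with g1 in degree 1 and
   the bracket of two elements of g1 (of degree 2) set to 0. *)
Definition sdbr (u v : g0 * g1) : g0 * g1 := (br u.1 v.1, act u.2 v.1 - act v.2 u.1).

Lemma sdbr_linear_l v : linear (sdbr^~ v).
Proof.
move=> a u w; rewrite /sdbr /= br_linl act_linl act_linr.
by congr (_, _); rewrite /= scalerBr opprD addrACA.
Qed.

Lemma sdbr_linear_r u : linear (sdbr u).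
Proof.
move=> a v w; rewrite /sdbr /= br_linr act_linr act_linl.
by congr (_, _); rewrite /= scalerBr opprD addrACA.
Qed.

Lemma sdbrC u v : sdbr u v = - sdbr v u.
Proof. by rewrite /sdbr brC; congr (_, _); rewrite /= opprB. Qed.

Lemma sdbr_derivation u v w : sdbr u (sdbr v w) = sdbr (sdbr u v) w + sdbr v (sdbr u w).
Proof.
have rearrange (A B C D F G : g1) :
    (A - B) - (C - D) = ((A - F) - (G - D)) + ((F - C) - (B - G)).
  rewrite !opprB [RHS]addrACA [A - F + _]addrA [D - G + _]addrA !subrK.
  by rewrite [LHS]addrACA [RHS]addrACA (addrC (- C)).
rewrite /sdbr /= br_derivation; congr (_, _).
by rewrite !act_br !(linear_funB (act_linear_l _)); apply: rearrange.
Qed.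

Lemma sdbr0l v : sdbr 0 v = 0. Proof. exact: linear_fun0 (sdbr_linear_l v). Qed.
Lemma sdbr0r u : sdbr u 0 = 0. Proof. exact: linear_fun0 (sdbr_linear_r u). Qed.

Lemma sdbr_fst0 u v : u.1 = 0 -> (sdbr u v).1 = 0.
Proof. by rewrite /= => ->; rewrite br0l. Qed.

Lemma sdbr_deg1 u v : u.1 = 0 -> v.1 = 0 -> sdbr u v = 0.
Proof. by rewrite /sdbr => -> ->; rewrite br0l !act0r subrr. Qed.

Fixpoint sd_eval (t : T) : g0 * g1 :=
  match t with
  | T0 x => (x, 0)
  | T1 m => (0, m)
  | Tzero _ => 0
  | Tadd a b => sd_eval a + sd_eval b
  | Tscale c a => c *: sd_eval a
  | Tbr a b => sdbr (sd_eval a) (sd_eval b)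
  end.

Definition sd_homog (n : nat) (u : g0 * g1) : Prop :=
  match n with 0 => u.2 = 0 | 1 => u.1 = 0 | _.+2 => u = 0 end.

Lemma sd_homog_fst n u : (0 < n)%N -> sd_homog n u -> u.1 = 0.
Proof. by case: n => [|[|n]] //= _ ->. Qed.

Lemma sd_homog0 n : sd_homog n 0.
Proof. by case: n => [|[]]. Qed.

Lemma sd_homog_sdbr p q u v :
  sd_homog p u -> sd_homog q v -> sd_homog (p + q) (sdbr u v).
Proof.
case: p => [|[|p]] hu; last by rewrite hu sdbr0l => _; apply: sd_homog0.
- case: q => [|[|q]] hv; last by rewrite hv sdbr0r; apply: sd_homog0.
  + by rewrite /= hu hv !act0l subrr.
  + by rewrite /= hv br0r.
- case: q => [|[|q]] hv; last by rewrite hv sdbr0r; apply: sd_homog0.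
  + by rewrite /= hu br0l.
  + exact: sdbr_deg1.
Qed.

Lemma sd_eval_homog t : wf t -> sd_homog (tdeg t) (sd_eval t).
Proof.
elim: t => [x|m|n|a IHa b IHb|c a IHa|a IHa b IHb] //=.
- by move=> _; apply: sd_homog0.
- case/and3P=> /IHa ha /IHb hb /eqP dab; rewrite -dab in hb.
  by case: (tdeg a) ha hb => [|[|p]] /= -> ->; rewrite addr0.
- by move=> /IHa; case: (tdeg a) => [|[|p]] /= ->; rewrite scaler0.
- by case/andP=> /IHa ha /IHb hb; apply: sd_homog_sdbr.
Qed.

Lemma sd_eval_Econg (a b : T) : E a b -> sd_eval a = sd_eval b.
Proof.
elim=> {a b} /=; try by move=> *; congruence.
- by move=> *; rewrite addrA.
- by move=> *; rewrite addrC.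
- by move=> *; rewrite addr0.
- by move=> *; rewrite scaleN1r subrr.
- by move=> *; rewrite scale1r.
- by move=> *; rewrite scalerA.
- by move=> *; rewrite scalerDr.
- by move=> *; rewrite scalerDl.
- by move=> x y; rewrite -[RHS]/(x + y, 0 + 0) addr0.
- by move=> c x; rewrite -[RHS]/(c *: x, c *: 0) scaler0.
- by move=> m n; rewrite -[RHS]/(0 + 0, m + n) addr0.
- by move=> c m; rewrite -[RHS]/(c *: 0, c *: m) scaler0.
- by move=> *; apply: (linear_funD (sdbr_linear_l _)).
- by move=> *; apply: (linear_funD (sdbr_linear_r _)).
- by move=> *; apply: (linear_funZ (sdbr_linear_l _)).
- by move=> *; apply: (linear_funZ (sdbr_linear_r _)).
- move=> a b /sd_eval_homog ha /sd_eval_homog hb.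
  have [/andP[oa ob]|even] := boolP (odd (tdeg a) && odd (tdeg b)).
    have A1 := sd_homog_fst (odd_gt0 oa) ha; have B1 := sd_homog_fst (odd_gt0 ob) hb.
    by rewrite !sdbr_deg1 ?scaler0.
  by rewrite -signr_odd oddM (negPf even) expr0 scaleN1r -sdbrC.
- move=> a b c /sd_eval_homog ha /sd_eval_homog hb _.
  have [/andP[oa ob]|even] := boolP (odd (tdeg a) && odd (tdeg b)).
    have A1 := sd_homog_fst (odd_gt0 oa) ha; have B1 := sd_homog_fst (odd_gt0 ob) hb.
    rewrite (sdbr_deg1 A1 B1) sdbr0l (sdbr_deg1 A1 (sdbr_fst0 _ B1)).
    by rewrite (sdbr_deg1 B1 (sdbr_fst0 _ A1)) scaler0 addr0.
  by rewrite -signr_odd oddM (negPf even) expr0 scale1r sdbr_derivation.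
- by move=> x y; rewrite -[LHS]/(br x y, act 0 y - act 0 x) !act0l subrr.
- by move=> m x; rewrite -[LHS]/(br 0 x, act m x - act 0 0) br0l act0l subr0.
Qed.

End Semidirect.

Section Generators.
Variables (k : fieldType) (g0 g1 : lmodType k)
  (br : g0 -> g0 -> g0) (act : g1 -> g0 -> g1).
Local Notation T := (term k g0 g1).
Local Notation E := (Econg br act).

Lemma Econg_generator (t : T) : wf t ->
  (tdeg t = 0%N -> exists x, E t (T0 x)) /\ (tdeg t = 1%N -> exists m, E t (T1 m)).
Proof.
elim: t => [x|m|n|a IHa b IHb|c a IHa|a IHa b IHb] /=.
- by split=> // _; exists x; apply: Erefl.
- by split=> // _; exists m; apply: Erefl.
- move=> _; split=> ->; exists 0; apply: Esym.
  + have := Ec_T0scale br act 0 (0 : g0); rewrite scaler0 => /Etrans; apply.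
    exact: (@Econg_scale0 _ _ _ br act (T0 0)).
  + have := Ec_T1scale br act 0 (0 : g1); rewrite scaler0 => /Etrans; apply.
    exact: (@Econg_scale0 _ _ _ br act (T1 0)).
- case/and3P=> /IHa[a0 a1] /IHb[b0 b1] /eqP dab; rewrite -dab in b0 b1.
  split=> h.
  + have [[x hx] [y hy]] := (a0 h, b0 h); exists (x + y).
    exact: Etrans (Ec_add hx hy) (Esym (Ec_T0add _ _ _ _)).
  + have [[m hm] [n hn]] := (a1 h, b1 h); exists (m + n).
    exact: Etrans (Ec_add hm hn) (Esym (Ec_T1add _ _ _ _)).
- move=> /IHa[a0 a1]; split=> h.
  + have [x hx] := a0 h; exists (c *: x).
    exact: Etrans (Ec_scale c hx) (Esym (Ec_T0scale _ _ _ _)).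
  + have [m hm] := a1 h; exists (c *: m).
    exact: Etrans (Ec_scale c hm) (Esym (Ec_T1scale _ _ _ _)).
- case/andP=> /IHa[a0 a1] /IHb[b0 b1]; split=> h.
  + move/eqP: h; rewrite addn_eq0 => /andP[/eqP/a0[x hx] /eqP/b0[y hy]].
    by exists (br x y); apply: Etrans (Ec_br hx hy) (Ec_rel00 _ _ _ _).
  + have [[ha hb]|[ha hb]] : (tdeg a = 0 /\ tdeg b = 1 \/ tdeg a = 1 /\ tdeg b = 0)%N.
      by lia.
    * have [[x hx] [m hm]] := (a0 ha, b1 hb); exists (- act m x).
      apply: Etrans (Ec_br hx hm) _.
      apply: Etrans (Ec_anti br act (a := T0 x) (b := T1 m) erefl erefl) _.
      apply: Etrans (Ec_scale _ (Ec_rel10 br act m x)) _.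
      by rewrite -scaleN1r; apply: Esym; apply: Ec_T1scale.
    * have [[m hm] [x hx]] := (a1 ha, b0 hb); exists (act m x).
      exact: Etrans (Ec_br hm hx) (Ec_rel10 _ _ _ _).
Qed.

End Generators.

Theorem mainTheorem6 (k : fieldType) (g0 g1 : lmodType k)
  (br : g0 -> g0 -> g0) (act : g1 -> g0 -> g1) (d : g1 -> g0) :
  [pchar k] =i pred0 ->
  LM_lie_algebra br act d ->
  (* E g is a dg Lie algebra: d is well defined on the quotient, d^2 = 0 *)
  (forall a b : term k g0 g1, wf a -> (0 < tdeg a)%N ->
      Econg br act a b -> Econg br act (dT d a) (dT d b)) /\
  (forall a : term k g0 g1, wf a -> (1 < tdeg a)%N ->
      Econg br act (dT d (dT d a)) (Tzero (tdeg a - 2))) /\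
  (* truncation: x |-> [x] : g0 -> (E g)_0 and m |-> [m] : g1 -> (E g)_1 are
     linear bijections compatible with d and the brackets *)
  (forall x y : g0, Econg br act (T0 x) (T0 y) -> x = y) /\
  (forall m n : g1, Econg br act (T1 m) (T1 n) -> m = n) /\
  (forall t : term k g0 g1, wf t -> tdeg t = 0%N ->
      exists x : g0, Econg br act t (T0 x)) /\
  (forall t : term k g0 g1, wf t -> tdeg t = 1%N ->
      exists m : g1, Econg br act t (T1 m)) /\
  (forall (c : k) (x y : g0),
      Econg br act (T0 (c *: x + y)) (Tadd (Tscale c (T0 x)) (T0 y))) /\
  (forall (c : k) (m n : g1),
      Econg br act (T1 (c *: m + n)) (Tadd (Tscale c (T1 m)) (T1 n))) /\
  (forall m : g1, dT d (T1 m : term k g0 g1) = T0 (d m)) /\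
  (forall x y : g0, Econg br act (Tbr (T0 x) (T0 y)) (T0 (br x y))) /\
  (forall (m : g1) (x : g0), Econg br act (Tbr (T1 m) (T0 x)) (T1 (act m x))).
Proof.
move=> _ [br_linl [br_linr [br_alt [br_jac [act_linl [act_linr [act_br [d_lin d_act]]]]]]]].
have eval_Econg := sd_eval_Econg br_linl br_linr br_alt br_jac act_linl act_linr act_br.
split; first by move=> a b wa _ h; apply: (dT_Econg (d := d) d_lin d_act h wa).
split; first by move=> a wa _; rewrite subn2; apply: dT_dT.
split; first by move=> x y /eval_Econg [].
split; first by move=> m n /eval_Econg [].
split; first by move=> t /(Econg_generator br act) [].
split; first by move=> t /(Econg_generator br act) [].
split.
  move=> c x y; apply: Etrans (Ec_T0add br act _ _) _.
  exact: Ec_add (Ec_T0scale _ _ _ _) (Erefl _ _ _).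
split.
  move=> c m n; apply: Etrans (Ec_T1add br act _ _) _.
  exact: Ec_add (Ec_T1scale _ _ _ _) (Erefl _ _ _).
split; first by [].
by split=> *; [apply: Ec_rel00 | apply: Ec_rel10].
Qed.
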